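(* Consider an economy of $N$ companies indexed by $i$, with parameters $\pi^0_i,\pi^1_i,\gamma_i>0$, and set $\mathrm{E}^{\mathrm{bau}}_i=\pi^0_i/\pi^1_i$, $\mathcal{W}^{\mathrm{bau}}_{\mathrm{C},i}=(\pi^0_i)^2/(2\pi^1_i)$, $\varrho_i=1/\pi^1_i+1/\gamma_i$, $\mathrm{E}^{\mathrm{bau}}=\sum_i\mathrm{E}^{\mathrm{bau}}_i$, $\mathcal{W}^{\mathrm{bau}}_{\mathrm{C}}=\sum_i\mathcal{W}^{\mathrm{bau}}_{\mathrm{C},i}$, $\varrho=\sum_i\varrho_i$. Let $A>0$ be the number of certificates auctioned, $\lambda>0$ the penalty rate and $\tau>0$ the tax rate, with $\tau\varrho_i<\mathrm{E}^{\mathrm{bau}}_i$ and $\lambda\varrho_i<\mathrm{E}^{\mathrm{bau}}_i$ for all $i$. Assume that $\tau$ and $\lambda$ are chosen such that the aggregate emissions are identical across all policy schemes, i.e. equal to $A$. Then: (1) Tax scheme: $\tau=(\mathrm{E}^{\mathrm{bau}}-A)/\varrho$, the wealth of company $i$ is $\mathcal{W}^{\mathrm{tax}}_{\mathrm{C},i}=\mathcal{W}^{\mathrm{bau}}_{\mathrm{C},i}-\tau\big(\mathrm{E}^{\mathrm{bau}}_i-\tfrac{\tau}{2}\varrho_i\big)$, the aggregate wealth of the companies is $\mathcal{W}^{\mathrm{tax}}_{\mathrm{C}}=\mathcal{W}^{\mathrm{bau}}_{\mathrm{C}}-\tau\big(\mathrm{E}^{\mathrm{bau}}-\tfrac{\tau}{2}\varrho\big)$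 and the wealth of the regulator is $\mathcal{W}^{\mathrm{tax}}_{\mathrm{R}}=\tau A$. (2) Spot market scheme (assuming $\mathrm{E}^{\mathrm{bau}}-\lambda\varrho\le A<\mathrm{E}^{\mathrm{bau}}$): outcomes are identical to the tax scheme: $\mathcal{W}^{\mathrm{mar}}_{\mathrm{C},i}=\mathcal{W}^{\mathrm{tax}}_{\mathrm{C},i}$ for every $i$, $\mathcal{W}^{\mathrm{mar}}_{\mathrm{C}}=\mathcal{W}^{\mathrm{tax}}_{\mathrm{C}}$ and $\mathcal{W}^{\mathrm{mar}}_{\mathrm{R}}=\mathcal{W}^{\mathrm{tax}}_{\mathrm{R}}$. (3) Purely intermediated market scheme (assuming $\tfrac12\big[\mathrm{E}^{\mathrm{bau}}+\varrho\big(\max_i(\mathrm{E}^{\mathrm{bau}}_i/\varrho_i)-2\lambda\big)\big]\le A<\sum_i\big[(\mathrm{E}^{\mathrm{bau}}_i/2)\vee(\mathrm{E}^{\mathrm{bau}}_i-\lambda\varrho_i)\big]$): the optimal intermediated price faced by company $i$ at the equilibrium spot price $\bm S$ is $\bm{P_i}(\bm S)=\tfrac{\tau}{2}+\tfrac12\big(\mathrm{E}^{\mathrm{bau}}_i/\varrho_i-A/\varrho\big)$; the wealth of the intermediary serving company $i$ and of company $i$ are $$\mathcal{W}^{\mathrm{mar}}_{\mathrm{F},i}=\frac{(\mathrm{E}^{\mathrm{mar}}_i)^2}{\varrho_i}=\frac{\varrho_i}{4}\Big(\frac{\mathrm{E}^{\mathrm{bau}}_i}{\varrho_i}-\frac{\mathrm{E}^{\mathrm{bau}}}{\varrho}+\frac{2A}{\varrho}\Big)^2,\qquad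 \mathcal{W}^{\mathrm{mar}}_{\mathrm{C},i}=\mathcal{W}^{\mathrm{tax}}_{\mathrm{C},i}-\frac32\mathcal{W}^{\mathrm{mar}}_{\mathrm{F},i}+\frac{A\varrho_i}{\varrho}\Big(\frac{\mathrm{E}^{\mathrm{bau}}_i}{\varrho_i}-\frac{\mathrm{E}^{\mathrm{bau}}}{\varrho}+\frac{3A}{2\varrho}\Big),$$ and the aggregates satisfy $\mathcal{W}^{\mathrm{mar}}_{\mathrm{F}}=\sum_i(\mathrm{E}^{\mathrm{mar}}_i)^2/\varrho_i$, $\mathcal{W}^{\mathrm{mar}}_{\mathrm{C}}=\mathcal{W}^{\mathrm{tax}}_{\mathrm{C}}-\tfrac32\mathcal{W}^{\mathrm{mar}}_{\mathrm{F}}+\tfrac{3}{2\varrho}A^2$ and $\mathcal{W}^{\mathrm{mar}}_{\mathrm{R}}=\mathcal{W}^{\mathrm{tax}}_{\mathrm{R}}-A^2/\varrho$.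
   Context: Company $i$ producing $q$ units has raw wealth $\pi_i(q)=\pi^0_iq-\tfrac{\pi^1_i}{2}q^2$; its emissions are $q$, reduced to $e^{-a}q$ by green effort $a$ at cost $c_i(q,a)=\tfrac{\gamma_i}{2}[(1-e^{-a})q]^2$. Under the tax scheme with rate $\tau$, company $i$ maximizes $\pi_i(q)-c_i(q,a)-\tau e^{-a}q$ over $(q,a)$ (subject to positive production and wealth); its emissions at the optimum are $\mathrm{E}^{\mathrm{tax}}_i=e^{-a}q$ and its optimal wealth is $\mathcal{W}^{\mathrm{tax}}_{\mathrm{C},i}$; aggregate emissions are $\mathrm{E}^{\mathrm{tax}}=\sum_i\mathrm{E}^{\mathrm{tax}}_i$, and the regulator collects $\mathcal{W}^{\mathrm{tax}}_{\mathrm{R}}=\tau\,\mathrm{E}^{\mathrm{tax}}$. Under the market scheme, company $i$ facing a certificate price $P_i\in(0,\lambda)$ maximizes $\pi_i(q)-c_i(q,a)-\delta P_i-\lambda(e^{-a}q-\delta)^+$ over $(q,a,\delta)$; its optimal certificate demand is $\delta_i(P)=\mathrm{E}^{\mathrm{bau}}_i-P\varrho_i$, its emissions are $\mathrm{E}^{\mathrm{mar}}_i=e^{-a}q$ and its optimal wealth is $\mathcal{W}^{\mathrm{mar}}_{\mathrm{C},i}$. The regulator auctions $A$ certificates at a spot price $S$. In the spot market scheme, every company buys directly at the auction, so $P_i=S$. In the purely intermediated market scheme, every company buys from its own financial intermediary, which buys at the auction at price $S$ and sets the price $\bm{P_i}(S)$ maximizing $\delta_i(P)(P-S)$ over $P\in[S,\lambda]$;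 the intermediary's wealth is $\mathcal{W}^{\mathrm{mar}}_{\mathrm{F},i}=\delta_i(\bm{P_i})(\bm{P_i}-S)$. The equilibrium spot price $\bm S$ is determined by clearing $A=\sum_i\delta_i(\bm{P_i}(\bm S))$. The regulator's market wealth is $\mathcal{W}^{\mathrm{mar}}_{\mathrm{R}}=\lambda\sum_i(\mathrm{E}^{\mathrm{mar}}_i-\bm{\delta_i})^++\bm S A$. Aggregates without index $i$ are sums over $i$. $x\vee y=\max(x,y)$. *)

From HB Require Import structures.
From mathcomp Require Import all_boot all_order all_algebra.
From mathcomp Require Import all_classical all_reals all_analysis.
Set Implicit Arguments. Unset Strict Implicit. Unset Printing Implicit Defensive.
Import Order.TTheory GRing.Theory Num.Theory.
Local Open Scope ring_scope.

Section Model.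
Context {R : realType}.

Definition raw_wealth (p0 p1 q : R) : R := p0 * q - p1 / 2 * q ^+ 2.
Definition abate_cost (g q a : R) : R := g / 2 * ((1 - expR (- a)) * q) ^+ 2.
Definition emissions (q a : R) : R := expR (- a) * q.

Definition tax_obj (p0 p1 g tau q a : R) : R :=
  raw_wealth p0 p1 q - abate_cost g q a - tau * emissions q a.

Definition tax_optimal (p0 p1 g tau q a : R) : Prop :=
  [/\ 0 < q, 0 <= a, 0 < tax_obj p0 p1 g tau q a &
    forall q' a', 0 < q' -> 0 <= a' -> 0 < tax_obj p0 p1 g tau q' a' ->
      tax_obj p0 p1 g tau q' a' <= tax_obj p0 p1 g tau q a].

Definition mar_obj (p0 p1 g lam P q a d : R) : R :=
  raw_wealth p0 p1 q - abate_cost g q a - d * P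
  - lam * Num.max 0 (emissions q a - d).

Definition mar_optimal (p0 p1 g lam P q a d : R) : Prop :=
  [/\ 0 < q, 0 <= a, 0 <= d, 0 < mar_obj p0 p1 g lam P q a d &
    forall q' a' d', 0 < q' -> 0 <= a' -> 0 <= d' ->
      0 < mar_obj p0 p1 g lam P q' a' d' ->
      mar_obj p0 p1 g lam P q' a' d' <= mar_obj p0 p1 g lam P q a d].

Definition Ebau (p0 p1 : R) : R := p0 / p1.
Definition Wbau (p0 p1 : R) : R := p0 ^+ 2 / (2 * p1).
Definition varrho (p1 g : R) : R := p1^-1 + g^-1.

Definition demand (p0 p1 g P : R) : R := Ebau p0 p1 - P * varrho p1 g.

Definition interm_obj (p0 p1 g S P : R) : R := demand p0 p1 g P * (P - S).
Definition interm_optimal (p0 p1 g lam S P : R) : Prop :=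
  S <= P <= lam /\
  forall P', S <= P' <= lam -> interm_obj p0 p1 g S P' <= interm_obj p0 p1 g S P.

End Model.

(* Completing the square in production and abatement shows that a company
   facing a unit price [P] for its emissions (a tax rate or a certificate
   price) attains the wealth [firm_value P] and emits its demand
   [Ebau - P * varrho]; under the market scheme buying exactly its emissions
   as certificates is optimal because the penalty [lam] is at least [P].  Each
   scheme is thus determined by the prices it sets: the tax rate, the spot
   price, which clears the auction exactly at the tax rate, or the
   intermediary's monopoly price [(c + S) / 2] for the linear demand
   [varrho * (c - P)] with choke price [c = Ebau / varrho], which clears at
   [S = (Eb - 2 A) / rho].  The wealth identities are then algebra in these
   prices. *)

From HB Require Import structures.
From mathcomp Require Import all_boot all_order all_algebra.
From mathcomp Require Import all_classical all_reals all_analysis.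
From mathcomp Require Import ring lra.
Import Order.TTheory GRing.Theory Num.Theory.
Local Open Scope ring_scope.

Definition firm_value {R : realType} (p0 p1 g P : R) : R :=
  Wbau p0 p1 - P * (Ebau p0 p1 - P / 2 * varrho p1 g).

Definition choke_price {R : realType} (p0 p1 g : R) : R :=
  Ebau p0 p1 / varrho p1 g.

Section Firm.
Context {R : realType} {p0 p1 g : R}.
Local Notation firm_value := (firm_value p0 p1 g).
Local Notation choke_price := (choke_price p0 p1 g).
Hypotheses (p1_gt0 : 0 < p1) (g_gt0 : 0 < g).

Lemma varrho_gt0 : 0 < varrho p1 g.
Proof. by apply: addr_gt0; rewrite invr_gt0. Qed.

Let p1_neq0 : p1 != 0. Proof. exact: lt0r_neq0. Qed.
Let g_neq0 : g != 0. Proof. exact: lt0r_neq0. Qed.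

Let half_sqr_ge0 (c x : R) : 0 < c -> 0 <= c / 2 * x ^+ 2.
Proof. by move=> c_gt0; rewrite mulr_ge0 ?sqr_ge0 // divr_ge0 // ltW. Qed.

Let half_sqr_eq0 (c x : R) : 0 < c -> (c / 2 * x ^+ 2 == 0) = (x == 0).
Proof. by move=> c_gt0; rewrite mulf_eq0 sqrf_eq0 gt_eqF // divr_gt0. Qed.

Lemma tax_objE P q a : tax_obj p0 p1 g P q a =
  firm_value P - p1 / 2 * (q - (p0 - P) / p1) ^+ 2
               - g / 2 * ((1 - expR (- a)) * q - P / g) ^+ 2.
Proof.
rewrite /tax_obj /firm_value /raw_wealth /abate_cost /emissions /Wbau /Ebau /varrho.
have -> : expR (- a) * q = q - (1 - expR (- a)) * q by ring.
by field; rewrite p1_neq0 g_neq0.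
Qed.

Lemma tax_obj_le_value P q a : tax_obj p0 p1 g P q a <= firm_value P.
Proof.
rewrite tax_objE -addrA gerDl -opprD oppr_le0.
by rewrite addr_ge0 ?half_sqr_ge0.
Qed.

Lemma emissions_of_value {P q a} :
  tax_obj p0 p1 g P q a = firm_value P -> emissions q a = demand p0 p1 g P.
Proof.
rewrite tax_objE => /eqP; rewrite -addrA -opprD -subr_eq0 addrAC subrr add0r oppr_eq0.
rewrite paddr_eq0 ?half_sqr_ge0 // !half_sqr_eq0 // !subr_eq0.
case/andP => /eqP q_opt /eqP abated_opt.
rewrite /emissions /demand /Ebau /varrho.
have -> : expR (- a) * q = q - (1 - expR (- a)) * q by ring.
by rewrite abated_opt q_opt; field; rewrite p1_neq0 g_neq0.
Qed.

Lemma production_split P : (p0 - P) / p1 = demand p0 p1 g P + P / g.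
Proof. by rewrite /demand /Ebau /varrho; field; rewrite p1_neq0 g_neq0. Qed.

Lemma firm_value_gt0 P :
  0 <= P -> P * varrho p1 g < Ebau p0 p1 -> 0 < firm_value P.
Proof.
move=> P_ge0 demand_gt0.
have -> : firm_value P = p1 / 2 * ((p0 - P) / p1) ^+ 2 + g / 2 * (P / g) ^+ 2.
  by rewrite /firm_value /Wbau /Ebau /varrho; field; rewrite p1_neq0 g_neq0.
rewrite ltr_wpDr ?half_sqr_ge0 // mulr_gt0 ?divr_gt0 // exprn_gt0 //.
by rewrite production_split ltr_wpDr ?subr_gt0 // divr_ge0 // ltW.
Qed.

Lemma mar_obj_le_tax_obj lam P q a d : 0 <= P <= lam -> 0 <= d ->
  mar_obj p0 p1 g lam P q a d <= tax_obj p0 p1 g P q a.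
Proof.
case/andP=> P_ge0 P_le_lam d_ge0; rewrite /mar_obj /tax_obj.
set e := emissions q a.
suff : P * e <= d * P + lam * Num.max 0 (e - d) by lra.
case: (leP 0 (e - d)) => [excess_ge0 | excess_lt0].
  by have := ler_wpM2r excess_ge0 P_le_lam; lra.
by have := ler_wpM2l P_ge0 (ltW excess_lt0); lra.
Qed.

Lemma mar_obj_emissions lam P q a :
  mar_obj p0 p1 g lam P q a (emissions q a) = tax_obj p0 p1 g P q a.
Proof. by rewrite /mar_obj /tax_obj subrr maxxx mulr0 subr0 mulrC. Qed.

Lemma demandE P : demand p0 p1 g P = varrho p1 g * (choke_price - P).
Proof. by rewrite /demand /choke_price; field; rewrite gt_eqF ?varrho_gt0. Qed.

Lemma interm_objE S P : interm_obj p0 p1 g S P =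
  varrho p1 g * ((choke_price - S) ^+ 2 / 4 - (P - (choke_price + S) / 2) ^+ 2).
Proof. by rewrite /interm_obj demandE; field. Qed.

Lemma interm_optimal_midpoint lam S :
  S <= choke_price -> choke_price + S <= 2 * lam ->
  interm_optimal p0 p1 g lam S ((choke_price + S) / 2).
Proof.
move=> S_le_choke mid_le_lam; split; first by apply/andP; split; lra.
move=> P' _; rewrite !interm_objE subrr expr0n /= subr0.
by rewrite ler_pM2l ?varrho_gt0 // gerDl oppr_le0 sqr_ge0.
Qed.

Lemma demand_midpoint S :
  demand p0 p1 g ((choke_price + S) / 2) = demand p0 p1 g S / 2.
Proof. by rewrite !demandE; field. Qed.

Lemma interm_obj_midpoint S :
  interm_obj p0 p1 g S ((choke_price + S) / 2)
  = demand p0 p1 g ((choke_price + S) / 2) ^+ 2 / varrho p1 g.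
Proof.
by rewrite /interm_obj demand_midpoint !demandE; field; rewrite gt_eqF ?varrho_gt0.
Qed.

Section PositiveDemand.
Context {P : R}.
Hypotheses (P_ge0 : 0 <= P) (demand_gt0 : P * varrho p1 g < Ebau p0 p1).

(* The effort [a = ln (q / e)] abates exactly [P / g] out of the optimal
   production [q = (p0 - P) / p1], leaving the emissions [e = demand P]. *)
Lemma tax_value_attained :
  exists q a, [/\ 0 < q, 0 <= a & tax_obj p0 p1 g P q a = firm_value P].
Proof.
set e := demand p0 p1 g P; set q := (p0 - P) / p1.
have e_gt0 : 0 < e by rewrite subr_gt0.
have qE : q = e + P / g by exact: production_split.
have abated_ge0 : 0 <= P / g by rewrite divr_ge0 // ltW.
have q_gt0 : 0 < q by rewrite qE ltr_wpDr.
exists q, (- ln (e / q)); split => //.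
  by rewrite oppr_ge0 ln_le0 // ler_pdivrMr // mul1r qE lerDl.
rewrite tax_objE opprK lnK; last by rewrite posrE divr_gt0.
have -> : (1 - e / q) * q - P / g = 0.
  by rewrite mulrBl mul1r divfK ?gt_eqF // qE; ring.
by rewrite subrr expr0n /= !mulr0 !subr0.
Qed.

Lemma tax_optimal_exists : exists q a, tax_optimal p0 p1 g P q a.
Proof.
have [q [a [q_gt0 a_ge0 qa_opt]]] := tax_value_attained.
exists q, a; split; rewrite ?qa_opt ?firm_value_gt0 //.
by move=> q' a' _ _ _; exact: tax_obj_le_value.
Qed.

Lemma tax_optimal_value {q a} :
  tax_optimal p0 p1 g P q a -> tax_obj p0 p1 g P q a = firm_value P.
Proof.
case=> _ _ _ qa_max; apply/eqP; rewrite eq_le tax_obj_le_value /=.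
have [q' [a' [q'_gt0 a'_ge0 qa'_opt]]] := tax_value_attained.
by rewrite -qa'_opt qa_max // qa'_opt firm_value_gt0.
Qed.

Context {lam : R}.
Hypothesis P_le_lam : P <= lam.

Let mar_obj_le_value q a d : 0 <= d -> mar_obj p0 p1 g lam P q a d <= firm_value P.
Proof.
move=> d_ge0; apply: le_trans (tax_obj_le_value P q a).
by rewrite mar_obj_le_tax_obj ?P_ge0.
Qed.

Let mar_value_attained : exists q a d,
  [/\ 0 < q, 0 <= a, 0 <= d & mar_obj p0 p1 g lam P q a d = firm_value P].
Proof.
have [q [a [q_gt0 a_ge0 qa_opt]]] := tax_value_attained.
exists q, a, (emissions q a); split; rewrite ?mar_obj_emissions //.
by rewrite mulr_ge0 ?expR_ge0 // ltW.
Qed.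

Lemma mar_optimal_exists : exists q a d, mar_optimal p0 p1 g lam P q a d.
Proof.
have [q [a [d [q_gt0 a_ge0 d_ge0 qad_opt]]]] := mar_value_attained.
exists q, a, d; split; rewrite ?qad_opt ?firm_value_gt0 //.
by move=> q' a' d' _ _ d'_ge0 _; exact: mar_obj_le_value.
Qed.

Lemma mar_optimal_value {q a d} :
  mar_optimal p0 p1 g lam P q a d -> mar_obj p0 p1 g lam P q a d = firm_value P.
Proof.
case=> _ _ d_ge0 _ qad_max; apply/eqP; rewrite eq_le mar_obj_le_value //=.
have [q' [a' [d' [q'_gt0 a'_ge0 d'_ge0 qad'_opt]]]] := mar_value_attained.
by rewrite -qad'_opt qad_max // qad'_opt firm_value_gt0.
Qed.

Lemma mar_optimal_emissions {q a d} :
  mar_optimal p0 p1 g lam P q a d -> emissions q a = demand p0 p1 g P.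
Proof.
move=> qad_opt; apply: emissions_of_value; apply/eqP; rewrite eq_le tax_obj_le_value /=.
rewrite -(mar_optimal_value qad_opt) mar_obj_le_tax_obj ?P_ge0 //.
by case: qad_opt.
Qed.

End PositiveDemand.
End Firm.

Lemma max_half_le (R : realFieldType) (x r lam M : R) :
  0 < r -> 0 <= M -> x / r / 2 - lam <= M ->
  Num.max (x / 2) (x - lam * r) <= x / 2 + r * M.
Proof.
move=> r_gt0 M_ge0 M_ge.
have -> : x - lam * r = x / 2 + r * (x / r / 2 - lam) by field; rewrite gt_eqF.
by rewrite ge_max lerDl (mulr_ge0 (ltW r_gt0) M_ge0) lerD2l ler_pM2l.
Qed.

Lemma sum_max_half_le (R : realFieldType) (N : nat) (E r : 'I_N -> R) (lam m : R) :
  (forall i, 0 < r i) -> (forall i, E i / r i <= m) ->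
  \sum_(i < N) Num.max (E i / 2) (E i - lam * r i)
  <= Num.max ((\sum_(i < N) E i) / 2)
             ((\sum_(i < N) E i + (\sum_(i < N) r i) * (m - 2 * lam)) / 2).
Proof.
move=> r_gt0 ratio_le_m; set M := Num.max 0 (m / 2 - lam).
apply: (@le_trans _ _ (\sum_(i < N) (E i / 2 + r i * M))).
  apply: ler_sum => i _; apply: max_half_le; rewrite ?le_max ?lexx //.
  by apply/orP; right; have := ratio_le_m i; lra.
rewrite big_split /= -mulr_suml -mulr_suml le_max /M.
case: (leP 0 (m / 2 - lam)) => _; last by rewrite mulr0 addr0 lexx.
by apply/orP; right; lra.
Qed.

Section Economy.
Context {R : realType} {N : nat} {p0 p1 g : 'I_N -> R}.
Hypotheses (p1_gt0 : forall i, 0 < p1 i) (g_gt0 : forall i, 0 < g i).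

Local Notation E_ i := (Ebau (p0 i) (p1 i)).
Local Notation rho_ i := (varrho (p1 i) (g i)).
Local Notation Eb := (\sum_(i < N) E_ i).
Local Notation rho := (\sum_(i < N) rho_ i).

Lemma sum_demand (S : R) : \sum_(i < N) demand (p0 i) (p1 i) (g i) S = Eb - S * rho.
Proof. by rewrite sumrB -mulr_sumr. Qed.

Lemma sum_varrho_gt0 (P : R) : 0 < Eb - P * rho -> 0 < rho.
Proof.
case: (ltnP 0 N) => [N_gt0 _ | N_le0].
  rewrite (bigD1 (Ordinal N_gt0)) //= ltr_wpDr ?varrho_gt0 //.
  by rewrite sumr_ge0 // => i _; rewrite ltW ?varrho_gt0.
have no_index (F : 'I_N -> R) : \sum_(i < N) F i = 0.
  by rewrite big1 // => -[i i_lt]; have := leq_trans i_lt N_le0.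
by rewrite !no_index mulr0 subrr ltxx.
Qed.

Lemma tax_optimal_profile_exists {tau : R} :
  0 <= tau -> (forall i, tau * rho_ i < E_ i) ->
  exists qt at_ : 'I_N -> R,
    forall i, tax_optimal (p0 i) (p1 i) (g i) tau (qt i) (at_ i).
Proof.
move=> tau_ge0 tau_lt.
have /boolp.choice[qa qa_opt] : forall i, exists qa : R * R,
    tax_optimal (p0 i) (p1 i) (g i) tau qa.1 qa.2.
  move=> i; have [q [a qa_opt]] := tax_optimal_exists (p1_gt0 i) (g_gt0 i) tau_ge0 (tau_lt i).
  by exists (q, a).
by exists (fun i => (qa i).1), (fun i => (qa i).2).
Qed.

Lemma sum_tax_emissions {tau : R} {qt at_ : 'I_N -> R} :
  0 <= tau -> (forall i, tau * rho_ i < E_ i) ->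
  (forall i, tax_optimal (p0 i) (p1 i) (g i) tau (qt i) (at_ i)) ->
  \sum_(i < N) emissions (qt i) (at_ i) = Eb - tau * rho.
Proof.
move=> tau_ge0 tau_lt qa_opt; rewrite -sum_demand; apply: eq_bigr => i _.
exact (emissions_of_value (p1_gt0 i) (g_gt0 i)
  (tax_optimal_value (p1_gt0 i) (g_gt0 i) tau_ge0 (tau_lt i) (qa_opt i))).
Qed.

Local Notation Wb := (\sum_(i < N) Wbau (p0 i) (p1 i)).

Section Schemes.
Context {A lam tau : R}.
Hypotheses (tau_gt0 : 0 < tau) (tau_lt : forall i, tau * rho_ i < E_ i).
Hypotheses (rho_gt0 : 0 < rho) (tauE : tau = (Eb - A) / rho).

Let tau_ge0 : 0 <= tau. Proof. exact: ltW. Qed.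
Let rho_neq0 : rho != 0. Proof. exact: lt0r_neq0. Qed.

Let A_clearing : A = Eb - tau * rho.
Proof. by rewrite tauE; field. Qed.

Let tax_value {i q a} : tax_optimal (p0 i) (p1 i) (g i) tau q a ->
  tax_obj (p0 i) (p1 i) (g i) tau q a = firm_value (p0 i) (p1 i) (g i) tau.
Proof. exact: (tax_optimal_value (p1_gt0 i) (g_gt0 i) tau_ge0 (tau_lt i)). Qed.

Lemma tax_scheme :
  tau = (Eb - A) / rho /\
  (forall i, exists q a, tax_optimal (p0 i) (p1 i) (g i) tau q a) /\
  (forall qt at_ : 'I_N -> R,
     (forall i, tax_optimal (p0 i) (p1 i) (g i) tau (qt i) (at_ i)) ->
     (forall i, tax_obj (p0 i) (p1 i) (g i) tau (qt i) (at_ i)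
        = Wbau (p0 i) (p1 i)
          - tau * (Ebau (p0 i) (p1 i) - tau / 2 * varrho (p1 i) (g i))) /\
     \sum_(i < N) tax_obj (p0 i) (p1 i) (g i) tau (qt i) (at_ i)
        = Wb - tau * (Eb - tau / 2 * rho) /\
     tau * \sum_(i < N) emissions (qt i) (at_ i) = tau * A).
Proof.
split=> //; split=> [i | qt at_ qa_opt].
  exact (tax_optimal_exists (p1_gt0 i) (g_gt0 i) tau_ge0 (tau_lt i)).
have WT i := tax_value (qa_opt i); split=> //; split.
  by rewrite (eq_bigr _ (fun i _ => WT i)) sumrB -mulr_sumr sumrB -mulr_sumr.
by rewrite (sum_tax_emissions tau_ge0 tau_lt qa_opt) A_clearing.
Qed.

Lemma spot_market_scheme :
  Eb - lam * rho <= A < Eb ->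
  forall S : R, A = \sum_(i < N) demand (p0 i) (p1 i) (g i) S ->
  (forall i, exists q a d, mar_optimal (p0 i) (p1 i) (g i) lam S q a d) /\
  (forall qm am dm : 'I_N -> R,
     (forall i, mar_optimal (p0 i) (p1 i) (g i) lam S (qm i) (am i) (dm i)) ->
   forall qt at_ : 'I_N -> R,
     (forall i, tax_optimal (p0 i) (p1 i) (g i) tau (qt i) (at_ i)) ->
     (forall i, mar_obj (p0 i) (p1 i) (g i) lam S (qm i) (am i) (dm i)
                = tax_obj (p0 i) (p1 i) (g i) tau (qt i) (at_ i)) /\
     \sum_(i < N) mar_obj (p0 i) (p1 i) (g i) lam S (qm i) (am i) (dm i)
       = \sum_(i < N) tax_obj (p0 i) (p1 i) (g i) tau (qt i) (at_ i) /\
     lam * \sum_(i < N) Num.max 0 (emissions (qm i) (am i)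
                                   - demand (p0 i) (p1 i) (g i) S) + S * A
       = tau * \sum_(i < N) emissions (qt i) (at_ i)).
Proof.
case/andP=> lam_low _ S S_clearing.
have -> : S = tau.
  by apply: (mulIf rho_neq0); move: S_clearing; rewrite sum_demand A_clearing; lra.
have tau_le_lam : tau <= lam.
  by rewrite -(ler_pM2r rho_gt0); move: lam_low; rewrite A_clearing; lra.
split=> [i | qm am dm qad_opt qt at_ qa_opt].
  exact (mar_optimal_exists (p1_gt0 i) (g_gt0 i) tau_ge0 (tau_lt i) tau_le_lam).
have WC i := mar_optimal_value (p1_gt0 i) (g_gt0 i) tau_ge0 (tau_lt i) tau_le_lam (qad_opt i).
have Em i := mar_optimal_emissions (p1_gt0 i) (g_gt0 i) tau_ge0 (tau_lt i) tau_le_lam (qad_opt i).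
have WC_WT i : mar_obj (p0 i) (p1 i) (g i) lam tau (qm i) (am i) (dm i)
               = tax_obj (p0 i) (p1 i) (g i) tau (qt i) (at_ i).
  by rewrite WC tax_value.
split=> //; split; first exact: eq_bigr.
rewrite big1 ?mulr0 ?add0r => [|i _]; last by rewrite Em subrr maxxx.
by rewrite (sum_tax_emissions tau_ge0 tau_lt qa_opt) -A_clearing mulrC.
Qed.

Section Intermediated.
Local Notation c_ i := (choke_price (p0 i) (p1 i) (g i)).
Hypothesis lam_lt : forall i, lam * rho_ i < E_ i.
Local Notation c_max := (\big[Num.max/0]_(i < N) (E_ i / rho_ i)).
Hypothesis A_ge : (Eb + rho * (c_max - 2 * lam)) / 2 <= A.
Hypothesis A_lt : A < \sum_(i < N) Num.max (E_ i / 2) (E_ i - lam * rho_ i).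

Let spot := (Eb - 2 * A) / rho.
Let price i := (c_ i + spot) / 2.

Let rho_i_gt0 i : 0 < rho_ i. Proof. exact: varrho_gt0. Qed.
Let rho_i_neq0 i : rho_ i != 0. Proof. exact: lt0r_neq0. Qed.

Let lam_lt_choke i : lam < c_ i.
Proof. by rewrite ltr_pdivlMr. Qed.

Let choke_add_spot_le i : c_ i + spot <= 2 * lam.
Proof.
have c_le_max : c_ i <= c_max by exact: le_bigmax.
suff : spot <= 2 * lam - c_max by lra.
by rewrite ler_pdivrMr //; move: A_ge; nra.
Qed.

(* By [sum_max_half_le] the upper bound on [A] is at most the maximum of
   [Eb / 2] and the lower bound on [A]; hence [A < Eb / 2]. *)
Let spot_gt0 : 0 < spot.
Proof.
rewrite divr_gt0 // subr_gt0.
have := lt_le_trans A_lt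
  (@sum_max_half_le _ _ _ _ lam c_max rho_i_gt0 (fun i => le_bigmax 0 _ i)).
rewrite lt_max => /orP[A_lt_half | A_lt_low]; first by lra.
by have := lt_le_trans A_lt_low A_ge; rewrite ltxx.
Qed.

Let spot_le_choke i : spot <= c_ i.
Proof. by have := choke_add_spot_le i; have := lam_lt_choke i; lra. Qed.

Let price_ge0 i : 0 <= price i.
Proof. by have := spot_le_choke i; have := spot_gt0; rewrite /price; lra. Qed.

Let price_le_lam i : price i <= lam.
Proof. by have := choke_add_spot_le i; rewrite /price; lra. Qed.

Let price_demand_gt0 i : price i * rho_ i < E_ i.
Proof. exact: le_lt_trans (ler_wpM2r (ltW (rho_i_gt0 i)) (price_le_lam i)) (lam_lt i). Qed.

Let priceE i : price i = tau / 2 + (E_ i / rho_ i - A / rho) / 2.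
Proof. by rewrite /price /spot /choke_price tauE; field; rewrite rho_neq0 rho_i_neq0. Qed.

Let price_clearing : A = \sum_(i < N) demand (p0 i) (p1 i) (g i) (price i).
Proof.
under eq_bigr => i _ do rewrite demand_midpoint //.
by rewrite -mulr_suml sum_demand /spot; field.
Qed.

Let interm_obj_price i : interm_obj (p0 i) (p1 i) (g i) spot (price i)
  = rho_ i / 4 * (E_ i / rho_ i - Eb / rho + 2 * A / rho) ^+ 2.
Proof.
rewrite interm_obj_midpoint // demand_midpoint // /demand /spot.
by field; rewrite ?rho_neq0 ?rho_i_neq0.
Qed.

Let firm_value_price i : firm_value (p0 i) (p1 i) (g i) (price i)
  = firm_value (p0 i) (p1 i) (g i) tau
    - 3 / 2 * interm_obj (p0 i) (p1 i) (g i) spot (price i)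
    + A * rho_ i / rho * (E_ i / rho_ i - Eb / rho + 3 * A / (2 * rho)).
Proof.
rewrite /firm_value /interm_obj /demand /price /spot /choke_price tauE.
by field; rewrite ?rho_neq0 ?rho_i_neq0.
Qed.

Let sum_transfer :
  \sum_(i < N) A * rho_ i / rho * (E_ i / rho_ i - Eb / rho + 3 * A / (2 * rho))
  = 3 / (2 * rho) * A ^+ 2.
Proof.
have termE i : A * rho_ i / rho * (E_ i / rho_ i - Eb / rho + 3 * A / (2 * rho))
    = A / rho * E_ i - A / rho * (Eb / rho - 3 * A / (2 * rho)) * rho_ i.
  by field; rewrite rho_neq0 rho_i_neq0.
by rewrite (eq_bigr _ (fun i _ => termE i)) sumrB -!mulr_sumr; field.
Qed.

Lemma intermediated_market_scheme :
  exists (S : R) (P : 'I_N -> R),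
    0 < S /\
    (forall i, interm_optimal (p0 i) (p1 i) (g i) lam S (P i)) /\
    A = \sum_(i < N) demand (p0 i) (p1 i) (g i) (P i) /\
    (forall i, P i = tau / 2
       + (Ebau (p0 i) (p1 i) / varrho (p1 i) (g i) - A / rho) / 2) /\
    (forall i, exists q a d, mar_optimal (p0 i) (p1 i) (g i) lam (P i) q a d) /\
    (forall qm am dm : 'I_N -> R,
       (forall i, mar_optimal (p0 i) (p1 i) (g i) lam (P i) (qm i) (am i) (dm i)) ->
     forall qt at_ : 'I_N -> R,
       (forall i, tax_optimal (p0 i) (p1 i) (g i) tau (qt i) (at_ i)) ->
     let Em := fun i => emissions (qm i) (am i) in
     let WF := fun i => demand (p0 i) (p1 i) (g i) (P i) * (P i - S) in
     let WC := fun i => mar_obj (p0 i) (p1 i) (g i) lam (P i) (qm i) (am i) (dm i) in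
     let WT := fun i => tax_obj (p0 i) (p1 i) (g i) tau (qt i) (at_ i) in
     (forall i,
        WF i = Em i ^+ 2 / varrho (p1 i) (g i) /\
        WF i = varrho (p1 i) (g i) / 4 *
               (Ebau (p0 i) (p1 i) / varrho (p1 i) (g i) - Eb / rho + 2 * A / rho) ^+ 2 /\
        WC i = WT i - 3 / 2 * WF i
               + A * varrho (p1 i) (g i) / rho *
                 (Ebau (p0 i) (p1 i) / varrho (p1 i) (g i) - Eb / rho
                  + 3 * A / (2 * rho))) /\
     \sum_(i < N) WF i = \sum_(i < N) Em i ^+ 2 / varrho (p1 i) (g i) /\
     \sum_(i < N) WC i = \sum_(i < N) WT i - 3 / 2 * \sum_(i < N) WF i
                         + 3 / (2 * rho) * A ^+ 2 /\
     lam * \sum_(i < N) Num.max 0 (Em i - demand (p0 i) (p1 i) (g i) (P i)) + S * A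
       = tau * \sum_(i < N) emissions (qt i) (at_ i) - A ^+ 2 / rho).
Proof.
exists spot, price; split; first exact: spot_gt0.
split=> [i |]; first exact: interm_optimal_midpoint (spot_le_choke i) (choke_add_spot_le i).
split; first exact: price_clearing.
split; first exact: priceE.
split=> [i | qm am dm qad_opt qt at_ qa_opt Em WF WC WT].
  exact (mar_optimal_exists (p1_gt0 i) (g_gt0 i) (price_ge0 i) (price_demand_gt0 i)
           (price_le_lam i)).
have EmE i : Em i = demand (p0 i) (p1 i) (g i) (price i).
  exact (mar_optimal_emissions (p1_gt0 i) (g_gt0 i) (price_ge0 i) (price_demand_gt0 i)
           (price_le_lam i) (qad_opt i)).
have WF_sqr i : WF i = Em i ^+ 2 / rho_ i.
  by rewrite EmE; exact: interm_obj_midpoint.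
have WC_split i : WC i = WT i - 3 / 2 * WF i
    + A * rho_ i / rho * (E_ i / rho_ i - Eb / rho + 3 * A / (2 * rho)).
  rewrite /WC /WT (mar_optimal_value (p1_gt0 i) (g_gt0 i) (price_ge0 i)
    (price_demand_gt0 i) (price_le_lam i) (qad_opt i)) (tax_value (qa_opt i)).
  exact: firm_value_price.
split=> [i |].
  by split; [exact: WF_sqr | split; [exact: interm_obj_price | exact: WC_split]].
split; first exact: eq_bigr.
split.
  by rewrite (eq_bigr _ (fun i _ => WC_split i)) big_split sumrB -mulr_sumr sum_transfer.
rewrite big1 ?mulr0 ?add0r => [|i _]; last by rewrite EmE subrr maxxx.
by rewrite (sum_tax_emissions tau_ge0 tau_lt qa_opt) /spot tauE; field.
Qed.

End Intermediated.

End Schemes.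
End Economy.

Theorem theorem3p1 (R : realType) (N : nat) (p0 p1 g : 'I_N -> R) (A lam tau : R) :
  (forall i, 0 < p0 i) -> (forall i, 0 < p1 i) -> (forall i, 0 < g i) ->
  0 < A -> 0 < lam -> 0 < tau ->
  (forall i, tau * varrho (p1 i) (g i) < Ebau (p0 i) (p1 i)) ->
  (forall i, lam * varrho (p1 i) (g i) < Ebau (p0 i) (p1 i)) ->
  (* aggregate tax emissions equal A *)
  (forall qt at_ : 'I_N -> R,
     (forall i, tax_optimal (p0 i) (p1 i) (g i) tau (qt i) (at_ i)) ->
     \sum_(i < N) emissions (qt i) (at_ i) = A) ->
  let Eb := \sum_(i < N) Ebau (p0 i) (p1 i) in
  let Wb := \sum_(i < N) Wbau (p0 i) (p1 i) in
  let rho := \sum_(i < N) varrho (p1 i) (g i) in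
  (* (1) tax scheme *)
  (tau = (Eb - A) / rho /\
   (forall i, exists q a, tax_optimal (p0 i) (p1 i) (g i) tau q a) /\
   (forall qt at_ : 'I_N -> R,
      (forall i, tax_optimal (p0 i) (p1 i) (g i) tau (qt i) (at_ i)) ->
      (forall i, tax_obj (p0 i) (p1 i) (g i) tau (qt i) (at_ i)
         = Wbau (p0 i) (p1 i)
           - tau * (Ebau (p0 i) (p1 i) - tau / 2 * varrho (p1 i) (g i))) /\
      \sum_(i < N) tax_obj (p0 i) (p1 i) (g i) tau (qt i) (at_ i)
         = Wb - tau * (Eb - tau / 2 * rho) /\
      tau * \sum_(i < N) emissions (qt i) (at_ i) = tau * A)) /\
  (* (2) spot market scheme *)
  (Eb - lam * rho <= A < Eb ->
   forall S : R, A = \sum_(i < N) demand (p0 i) (p1 i) (g i) S ->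
   (forall i, exists q a d, mar_optimal (p0 i) (p1 i) (g i) lam S q a d) /\
   (forall qm am dm : 'I_N -> R,
      (forall i, mar_optimal (p0 i) (p1 i) (g i) lam S (qm i) (am i) (dm i)) ->
    forall qt at_ : 'I_N -> R,
      (forall i, tax_optimal (p0 i) (p1 i) (g i) tau (qt i) (at_ i)) ->
      (forall i, mar_obj (p0 i) (p1 i) (g i) lam S (qm i) (am i) (dm i)
                 = tax_obj (p0 i) (p1 i) (g i) tau (qt i) (at_ i)) /\
      \sum_(i < N) mar_obj (p0 i) (p1 i) (g i) lam S (qm i) (am i) (dm i)
        = \sum_(i < N) tax_obj (p0 i) (p1 i) (g i) tau (qt i) (at_ i) /\
      lam * \sum_(i < N) Num.max 0 (emissions (qm i) (am i)
                                    - demand (p0 i) (p1 i) (g i) S) + S * A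
        = tau * \sum_(i < N) emissions (qt i) (at_ i))) /\
  (* (3) purely intermediated market scheme *)
  ((Eb + rho * (\big[Num.max/0]_(i < N) (Ebau (p0 i) (p1 i) / varrho (p1 i) (g i))
                - 2 * lam)) / 2 <= A <
     \sum_(i < N) Num.max (Ebau (p0 i) (p1 i) / 2)
                          (Ebau (p0 i) (p1 i) - lam * varrho (p1 i) (g i)) ->
   exists (S : R) (P : 'I_N -> R),
     0 < S /\
     (forall i, interm_optimal (p0 i) (p1 i) (g i) lam S (P i)) /\
     A = \sum_(i < N) demand (p0 i) (p1 i) (g i) (P i) /\
     (forall i, P i = tau / 2
        + (Ebau (p0 i) (p1 i) / varrho (p1 i) (g i) - A / rho) / 2) /\
     (forall i, exists q a d, mar_optimal (p0 i) (p1 i) (g i) lam (P i) q a d) /\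
     (forall qm am dm : 'I_N -> R,
        (forall i, mar_optimal (p0 i) (p1 i) (g i) lam (P i) (qm i) (am i) (dm i)) ->
      forall qt at_ : 'I_N -> R,
        (forall i, tax_optimal (p0 i) (p1 i) (g i) tau (qt i) (at_ i)) ->
      let Em := fun i => emissions (qm i) (am i) in
      let WF := fun i => demand (p0 i) (p1 i) (g i) (P i) * (P i - S) in
      let WC := fun i => mar_obj (p0 i) (p1 i) (g i) lam (P i) (qm i) (am i) (dm i) in
      let WT := fun i => tax_obj (p0 i) (p1 i) (g i) tau (qt i) (at_ i) in
      (forall i,
         WF i = Em i ^+ 2 / varrho (p1 i) (g i) /\
         WF i = varrho (p1 i) (g i) / 4 *
                (Ebau (p0 i) (p1 i) / varrho (p1 i) (g i) - Eb / rho + 2 * A / rho) ^+ 2 /\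
         WC i = WT i - 3 / 2 * WF i
                + A * varrho (p1 i) (g i) / rho *
                  (Ebau (p0 i) (p1 i) / varrho (p1 i) (g i) - Eb / rho
                   + 3 * A / (2 * rho))) /\
      \sum_(i < N) WF i = \sum_(i < N) Em i ^+ 2 / varrho (p1 i) (g i) /\
      \sum_(i < N) WC i = \sum_(i < N) WT i - 3 / 2 * \sum_(i < N) WF i
                          + 3 / (2 * rho) * A ^+ 2 /\
      lam * \sum_(i < N) Num.max 0 (Em i - demand (p0 i) (p1 i) (g i) (P i)) + S * A
        = tau * \sum_(i < N) emissions (qt i) (at_ i) - A ^+ 2 / rho)).
Proof.
move=> _ p1_gt0 g_gt0 A_gt0 _ tau_gt0 tau_lt lam_lt sum_emissions Eb Wb rho.
have tau_ge0 := ltW tau_gt0.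
have [qt [at_ qa_opt]] := tax_optimal_profile_exists p1_gt0 g_gt0 tau_ge0 tau_lt.
have A_clearing : A = Eb - tau * rho.
  by rewrite -(sum_emissions _ _ qa_opt) (sum_tax_emissions p1_gt0 g_gt0 tau_ge0 tau_lt qa_opt).
have rho_gt0 : 0 < rho.
  by move: A_gt0; rewrite A_clearing; exact: sum_varrho_gt0.
have tauE : tau = (Eb - A) / rho by rewrite A_clearing; field; exact: lt0r_neq0.
split; first exact: tax_scheme.
split; first exact: spot_market_scheme.
by case/andP=> A_ge A_lt; exact: intermediated_market_scheme.
Qed.
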